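(* Let $\phi:\mathcal A\to\mathcal A$ be a peak selection for $(C_u)_{u\in\mathcal A}$ satisfying (AC1) and (AC2) with constants $\gamma,\delta$, and let $\alpha:=\tfrac12(1-\delta)\cos\gamma$ be the constant used in the definition of the stepsize sets $S(\cdot)$. If $u_0\in\operatorname{Ran}\phi$, $\nabla\mathcal E(u_0)\ne0$ and $\phi$ is continuous at $u_0$, then there exist an open neighborhood $V$ of $u_0$ and $s^*>0$ such that $S(u)\subset[s^*,+\infty)$ for every $u\in V\cap\operatorname{Ran}\phi$.
   Context: $\mathcal H$ is a real Hilbert space with inner product $\langle\cdot,\cdot\rangle$ and norm $\|\cdot\|$; $\mathcal E\in C^1(\mathcal H;\mathbb R)$; $\mathcal A\subset\mathcal H$ is open; $B(u,r)$ is the open ball. For a closed cone $C$, $\operatorname{span}C$ is the smallest closed linear subspace containing $C$, $\operatorname{int}C$ is the interior of $C$ relative to $\operatorname{span}C$; $d\perp C$ means $d\perp\operatorname{span}C$. A peak selection for $(C_u)_{u\in\mathcal A}$ is a map $\phi:\mathcal A\to\mathcal A$ such that for all $u\in\mathcal A$: (1) $C_u$ is a closed cone with vertex $0$; (2) $\phi(u)\in\operatorname{int}C_u$; (3) $\phi(v)=\phi(u)$ for every $v\in\operatorname{int}C_u$; (4) $\phi(u)$ is a global maximum point of $\mathcal E$ on $C_u$. $A_\gamma(d):=\{d':\|d'\|=\|d\|,\ \arccos(\langle d,d'\rangle/(\|d\|\|d'\|))\le\gamma\}$ for $d\ne0$, $A_\gamma(0)=\{0\}$; $I\,S:=\{ts:t\in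 I,s\in S\}$. (AC1): for all $u\in\mathcal A$, $u\in C_u$. (AC2): there exist $\gamma\in(0,\pi/2)$, $\delta\in(0,1)$ such that for every $u_0\in\operatorname{Ran}\phi$ there is $r>0$ such that for all $\tilde u_0\in\operatorname{Ran}\phi\cap B(u_0,r)$ and all $d\in B(0,r)$ with $d\perp C_{\tilde u_0}$ and $\tilde u_0+d\in\mathcal A$: $C_{\tilde u_0+d}\cap B(u_0,r)\subset C_{\tilde u_0}+[1-\delta,1+\delta]A_\gamma(d)$. Stepsizes: for $u_0\in\operatorname{Ran}\phi$ with $\nabla\mathcal E(u_0)\ne0$, $S^*(u_0):=\{s>0: u_s:=u_0-s\nabla\mathcal E(u_0)/\|\nabla\mathcal E(u_0)\|\in\mathcal A \text{ and } \mathcal E(\phi(u_s))-\mathcal E(u_0)<-\alpha s\|\nabla\mathcal E(u_0)\|\}$ and $S(u_0):=S^*(u_0)\cap[\tfrac12\sup S^*(u_0),+\infty)$. *)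

From Stdlib Require Import Reals Lra.
Open Scope R_scope.

Record Hilbert := mkHilbert {
  hcar :> Type;
  hadd : hcar -> hcar -> hcar;
  hopp : hcar -> hcar;
  hzero : hcar;
  hscal : R -> hcar -> hcar;
  hinner : hcar -> hcar -> R;
  hadd_assoc : forall x y z, hadd x (hadd y z) = hadd (hadd x y) z;
  hadd_comm : forall x y, hadd x y = hadd y x;
  hadd_zero : forall x, hadd hzero x = x;
  hadd_opp : forall x, hadd x (hopp x) = hzero;
  hscal_assoc : forall a b x, hscal a (hscal b x) = hscal (a * b) x;
  hscal_one : forall x, hscal 1 x = x;
  hscal_distr_v : forall a x y, hscal a (hadd x y) = hadd (hscal a x) (hscal a y);
  hscal_distr_s : forall a b x, hscal (a + b) x = hadd (hscal a x) (hscal b x);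
  hinner_sym : forall x y, hinner x y = hinner y x;
  hinner_add : forall x y z, hinner (hadd x y) z = hinner x z + hinner y z;
  hinner_scal : forall a x y, hinner (hscal a x) y = a * hinner x y;
  hinner_pos : forall x, 0 <= hinner x x;
  hinner_def : forall x, hinner x x = 0 -> x = hzero;
  hcomplete : forall u : nat -> hcar,
    (forall eps, eps > 0 -> exists N, forall n m, (n >= N)%nat -> (m >= N)%nat ->
        sqrt (hinner (hadd (u n) (hopp (u m))) (hadd (u n) (hopp (u m)))) < eps) ->
    exists l, forall eps, eps > 0 -> exists N, forall n, (n >= N)%nat ->
        sqrt (hinner (hadd (u n) (hopp l)) (hadd (u n) (hopp l))) < eps
}.

Arguments hadd {h}. Arguments hopp {h}. Arguments hzero {h}.
Arguments hscal {h}. Arguments hinner {h}.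

Section HDefs.
Context {H : Hilbert}.

Definition hsub (x y : H) : H := hadd x (hopp y).
Definition hnorm (x : H) : R := sqrt (hinner x x).

Definition ball (u : H) (r : R) (x : H) : Prop := hnorm (hsub x u) < r.

Definition is_open (S : H -> Prop) : Prop :=
  forall x, S x -> exists r, r > 0 /\ forall y, ball x r y -> S y.

Definition is_closed (S : H -> Prop) : Prop :=
  is_open (fun x => ~ S x).

Definition is_cone (C : H -> Prop) : Prop :=
  forall t x, 0 <= t -> C x -> C (hscal t x).
Definition closed_cone (C : H -> Prop) : Prop := is_closed C /\ is_cone C.

Definition closed_subspace (M : H -> Prop) : Prop :=
  is_closed M /\ M hzero /\ (forall x y, M x -> M y -> M (hadd x y)) /\
  (forall a x, M x -> M (hscal a x)).

Definition span (C : H -> Prop) (x : H) : Prop :=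
  forall M, closed_subspace M -> (forall y, C y -> M y) -> M x.

Definition rel_int (C : H -> Prop) (x : H) : Prop :=
  C x /\ exists r, r > 0 /\ forall y, span C y -> ball x r y -> C y.

Definition orth (d : H) (C : H -> Prop) : Prop :=
  forall y, span C y -> hinner d y = 0.

Definition peak_selection (E : H -> R) (A : H -> Prop) (C : H -> H -> Prop)
  (phi : H -> H) : Prop :=
  (forall u, A u -> A (phi u)) /\
  forall u, A u ->
    closed_cone (C u) /\
    rel_int (C u) (phi u) /\
    (forall v, rel_int (C u) v -> phi v = phi u) /\
    (C u (phi u) /\ forall w, C u w -> E w <= E (phi u)).

Definition Ran (A : H -> Prop) (phi : H -> H) (v : H) : Prop :=
  exists u, A u /\ phi u = v.

Definition Agamma (gamma : R) (d d' : H) : Prop :=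
  (d <> hzero /\ hnorm d' = hnorm d /\
     acos (hinner d d' / (hnorm d * hnorm d')) <= gamma)
  \/ (d = hzero /\ d' = hzero).

Definition cone_plus (C : H -> Prop) (gamma delta : R) (d x : H) : Prop :=
  exists c t s, C c /\ 1 - delta <= t <= 1 + delta /\ Agamma gamma d s /\
    x = hadd c (hscal t s).

Definition AC1 (A : H -> Prop) (C : H -> H -> Prop) : Prop :=
  forall u, A u -> C u u.

Definition AC2 (A : H -> Prop) (C : H -> H -> Prop) (phi : H -> H)
  (gamma delta : R) : Prop :=
  0 < gamma < PI / 2 /\ 0 < delta < 1 /\
  forall u0, Ran A phi u0 -> exists r, r > 0 /\
    forall tu0 d, Ran A phi tu0 -> ball u0 r tu0 -> ball hzero r d ->
      orth d (C tu0) -> A (hadd tu0 d) ->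
      forall x, C (hadd tu0 d) x -> ball u0 r x -> cone_plus (C tu0) gamma delta d x.

(** E is C^1 with gradient gradE (Riesz representative of the Frechet derivative) *)
Definition is_C1_gradient (E : H -> R) (gradE : H -> H) : Prop :=
  (forall u eps, eps > 0 -> exists dl, dl > 0 /\ forall h, hnorm h < dl ->
     Rabs (E (hadd u h) - E u - hinner (gradE u) h) <= eps * hnorm h) /\
  (forall u eps, eps > 0 -> exists dl, dl > 0 /\ forall v, hnorm (hsub v u) < dl ->
     hnorm (hsub (gradE v) (gradE u)) < eps).

Definition u_s (gradE : H -> H) (u0 : H) (s : R) : H :=
  hsub u0 (hscal (s / hnorm (gradE u0)) (gradE u0)).

Definition Sstar (E : H -> R) (gradE : H -> H) (A : H -> Prop) (phi : H -> H)
  (alpha : R) (u0 : H) (s : R) : Prop :=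
  s > 0 /\ A (u_s gradE u0 s) /\
  E (phi (u_s gradE u0 s)) - E u0 < - alpha * s * hnorm (gradE u0).

(** S(u0) = S*(u0) ∩ [sup S*(u0)/2, +oo); empty if sup S* = +oo (no lub). *)
Definition Sset (E : H -> R) (gradE : H -> H) (A : H -> Prop) (phi : H -> H)
  (alpha : R) (u0 : H) (s : R) : Prop :=
  Sstar E gradE A phi alpha u0 s /\
  exists m, is_lub (Sstar E gradE A phi alpha u0) m /\ m / 2 <= s.

Definition continuous_at_on (A : H -> Prop) (phi : H -> H) (u0 : H) : Prop :=
  forall eps, eps > 0 -> exists dl, dl > 0 /\
    forall v, A v -> hnorm (hsub v u0) < dl -> hnorm (hsub (phi v) (phi u0)) < eps.

End HDefs.

From Stdlib Require Import Reals Lra.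
Open Scope R_scope.

(** The proof exhibits a
    single stepsize [s0 > 0] which belongs to [S*(u)] for every point [u] of
    [Ran phi] close to [u0]; since every element of [S(u)] is at least half the
    supremum of [S*(u)], it is then at least [s0 / 2].

    To see that [s0 ∈ S*(u)], write [g = grad E u] and [d = -s0 g/|g|].
    At a peak the gradient is orthogonal to the cone [C_u], so (AC2) writes the
    new peak [x = phi (u + d)] as [c + t s'] with [c ∈ C_u], [t ≥ 1 - delta]
    and [s'] at angle at most [gamma] from [d].  Then [E c <= E u], and by the
    mean value theorem [E x - E c = t <grad E xi, s'>], which is at most
    [-(3/4)(1-delta) cos gamma |g| s0] as long as the gradient varies little
    near [x].  Continuity of [phi] and of [grad E] at [u0] provide this control
    uniformly in [u]. *)

Arguments hadd_assoc {h}.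
Arguments hadd_comm {h}.
Arguments hadd_zero {h}.
Arguments hadd_opp {h}.
Arguments hscal_assoc {h}.
Arguments hscal_one {h}.
Arguments hscal_distr_v {h}.
Arguments hscal_distr_s {h}.
Arguments hinner_sym {h}.
Arguments hinner_add {h}.
Arguments hinner_scal {h}.
Arguments hinner_pos {h}.
Arguments hinner_def {h}.

Section HilbertGeometry.
Context {H : Hilbert}.
Implicit Types x y z : H.

Lemma hadd_zero_r x : hadd x hzero = x.
Proof. rewrite hadd_comm; apply hadd_zero. Qed.

Lemma hscal_zero x : hscal 0 x = hzero.
Proof.
  assert (Hdouble : hscal 0 x = hadd (hscal 0 x) (hscal 0 x)).
  { rewrite <- hscal_distr_s. f_equal; ring. }
  set (y := hscal 0 x) in *.
  rewrite <- (hadd_opp y). rewrite Hdouble at 2.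
  rewrite <- hadd_assoc, hadd_opp, hadd_zero_r. reflexivity.
Qed.

Lemma hopp_scal x : hopp x = hscal (-1) x.
Proof.
  assert (Hcancel : hadd x (hscal (-1) x) = hzero).
  { rewrite <- (hscal_one x) at 1. rewrite <- hscal_distr_s.
    replace (1 + -1) with 0 by ring. apply hscal_zero. }
  rewrite <- (hadd_zero_r (hopp x)), <- Hcancel, hadd_assoc.
  rewrite (hadd_comm (hopp x) x), hadd_opp, hadd_zero. reflexivity.
Qed.

Lemma hinner_add_r x y z : hinner x (hadd y z) = hinner x y + hinner x z.
Proof. rewrite hinner_sym, hinner_add, (hinner_sym y), (hinner_sym z). ring. Qed.

Lemma hinner_scal_r a x y : hinner x (hscal a y) = a * hinner x y.
Proof. rewrite hinner_sym, hinner_scal, (hinner_sym y). ring. Qed.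

Lemma hinner_opp_l x y : hinner (hopp x) y = - hinner x y.
Proof. rewrite hopp_scal, hinner_scal. ring. Qed.

Lemma hinner_sub_l x y z : hinner (hsub x y) z = hinner x z - hinner y z.
Proof. unfold hsub. rewrite hinner_add, hinner_opp_l. ring. Qed.

Lemma hnorm_pos x : 0 <= hnorm x.
Proof. apply sqrt_pos. Qed.

Lemma hnorm_sq x : hnorm x * hnorm x = hinner x x.
Proof. unfold hnorm. apply sqrt_sqrt, hinner_pos. Qed.

Lemma hinner_expand x y t :
  hinner (hadd x (hscal t y)) (hadd x (hscal t y)) =
  hinner x x + 2 * t * hinner x y + t * t * hinner y y.
Proof.
  rewrite hinner_add, !hinner_add_r, !hinner_scal, !hinner_scal_r, (hinner_sym y x).
  ring.
Qed.

(** Cauchy–Schwarz, from the nonnegativity of [|x - (<x,y>/|y|^2) y|^2]. *)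
Lemma cauchy_sq x y : hinner x y * hinner x y <= hinner x x * hinner y y.
Proof.
  destruct (Req_dec (hinner y y) 0) as [Hy0|Hy0].
  - apply hinner_def in Hy0. subst y.
    rewrite <- (hscal_zero hzero), hinner_scal_r, hinner_scal.
    pose proof (hinner_pos x). nra.
  - pose proof (hinner_pos y).
    pose proof (hinner_pos (hadd x (hscal (- (hinner x y / hinner y y)) y))) as Hpos.
    rewrite hinner_expand in Hpos.
    set (a := hinner x y) in *. set (b := hinner y y) in *. set (c := hinner x x) in *.
    replace (c + 2 * - (a / b) * a + - (a / b) * - (a / b) * b)
      with ((c * b - a * a) / b) in Hpos by (field; lra).
    assert (0 <= c * b - a * a); [|lra].
    replace (c * b - a * a) with (b * ((c * b - a * a) / b)) by (field; lra).
    apply Rmult_le_pos; lra.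
Qed.

Lemma cauchy x y : Rabs (hinner x y) <= hnorm x * hnorm y.
Proof.
  unfold hnorm. rewrite <- sqrt_mult by apply hinner_pos.
  rewrite <- sqrt_Rsqr_abs. apply sqrt_le_1_alt. apply cauchy_sq.
Qed.

Lemma cauchy_le x y : hinner x y <= hnorm x * hnorm y.
Proof. pose proof (cauchy x y). pose proof (Rle_abs (hinner x y)). lra. Qed.

Lemma cauchy_ge x y : - (hnorm x * hnorm y) <= hinner x y.
Proof.
  pose proof (cauchy x y). pose proof (Rle_abs (- hinner x y)).
  rewrite Rabs_Ropp in *. lra.
Qed.

Lemma hnorm_scal a x : hnorm (hscal a x) = Rabs a * hnorm x.
Proof.
  unfold hnorm. rewrite hinner_scal, hinner_scal_r.
  replace (a * (a * hinner x x)) with (Rsqr a * hinner x x) by (unfold Rsqr; ring).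
  rewrite sqrt_mult by (try apply Rle_0_sqr; apply hinner_pos).
  rewrite sqrt_Rsqr_abs. reflexivity.
Qed.

Lemma hnorm_opp x : hnorm (hopp x) = hnorm x.
Proof. rewrite hopp_scal, hnorm_scal, Rabs_left by lra. ring. Qed.

Lemma hnorm_zero : hnorm (@hzero H) = 0.
Proof. rewrite <- (hscal_zero hzero), hnorm_scal, Rabs_R0. ring. Qed.

Lemma hnorm_zero_inv x : hnorm x = 0 -> x = hzero.
Proof. intro Hx. apply hinner_def. rewrite <- hnorm_sq, Hx. ring. Qed.

Lemma hnorm_pos_of_nonzero x : x <> hzero -> 0 < hnorm x.
Proof.
  intro Hx. destruct (hnorm_pos x) as [|Hx0]; [assumption|].
  exfalso. apply Hx, hnorm_zero_inv. auto.
Qed.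

Lemma hnorm_triangle x y : hnorm (hadd x y) <= hnorm x + hnorm y.
Proof.
  pose proof (hnorm_pos x). pose proof (hnorm_pos y). pose proof (hnorm_pos (hadd x y)).
  apply Rsqr_incr_0_var; [|lra]. unfold Rsqr.
  rewrite hnorm_sq. rewrite <- (hscal_one y) at 1 2.
  rewrite hinner_expand, <- !hnorm_sq.
  pose proof (cauchy_le x y). nra.
Qed.

Lemma hsub_self x : hsub x x = hzero.
Proof. apply hadd_opp. Qed.

Lemma hsub_zero x : hsub x hzero = x.
Proof.
  unfold hsub. rewrite hopp_scal, <- (hscal_zero (@hzero H)), hscal_assoc.
  replace (-1 * 0) with 0 by ring. rewrite hscal_zero. apply hadd_zero_r.
Qed.

Lemma hsub_add_l x y z : hsub (hadd x y) z = hadd (hsub x z) y.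
Proof. unfold hsub. rewrite <- !hadd_assoc. f_equal. apply hadd_comm. Qed.

Lemma hsub_add_cancel x y : hsub (hadd x y) x = y.
Proof. rewrite hsub_add_l, hsub_self. apply hadd_zero. Qed.

Lemma hsub_chain x y z : hsub x y = hadd (hsub x z) (hsub z y).
Proof.
  unfold hsub. rewrite <- hadd_assoc. f_equal.
  rewrite hadd_assoc, (hadd_comm (hopp z) z), hadd_opp, hadd_zero. reflexivity.
Qed.

Lemma hnorm_sub_sym x y : hnorm (hsub x y) = hnorm (hsub y x).
Proof.
  rewrite <- hnorm_opp. f_equal. unfold hsub.
  rewrite !hopp_scal, hscal_distr_v, hscal_assoc.
  replace (-1 * -1) with 1 by ring. rewrite hscal_one. apply hadd_comm.
Qed.

Lemma hnorm_sub_tri x y z : hnorm (hsub x y) <= hnorm (hsub x z) + hnorm (hsub z y).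
Proof. rewrite (hsub_chain x y z). apply hnorm_triangle. Qed.

Lemma hnorm_sub_via x y z : hnorm (hsub x y) <= hnorm (hsub x z) + hnorm (hsub y z).
Proof. rewrite (hnorm_sub_sym y z). apply hnorm_sub_tri. Qed.

Lemma hnorm_lower x y : hnorm y - hnorm (hsub x y) <= hnorm x.
Proof.
  pose proof (hnorm_sub_tri y hzero x) as Htri.
  rewrite !hsub_zero, hnorm_sub_sym in Htri. lra.
Qed.

Lemma ball_open (u : H) r : is_open (ball u r).
Proof.
  intros x Hx. unfold ball in *. exists (r - hnorm (hsub x u)). split; [lra|].
  intros y Hy. pose proof (hnorm_sub_tri y u x). lra.
Qed.

Lemma span_of (C : H -> Prop) x : C x -> span C x.
Proof. intros Cx M _ HM. auto. Qed.

Lemma span_add (C : H -> Prop) x y : span C x -> span C y -> span C (hadd x y).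
Proof.
  intros Hx Hy M HM HCM. pose proof HM as (_ & _ & Hadd & _).
  apply Hadd; [apply Hx | apply Hy]; assumption.
Qed.

Lemma span_scal (C : H -> Prop) a x : span C x -> span C (hscal a x).
Proof.
  intros Hx M HM HCM. pose proof HM as (_ & _ & _ & Hscal).
  apply Hscal, Hx; assumption.
Qed.

Lemma Agamma_inner_lower gamma (d s : H) :
  0 <= gamma <= PI -> d <> hzero -> Agamma gamma d s ->
  hnorm s = hnorm d /\ cos gamma * (hnorm d * hnorm d) <= hinner d s.
Proof.
  intros Hgamma Hd [[_ [Hs Hangle]] | [Hd0 _]]; [|contradiction].
  split; [exact Hs|]. rewrite Hs in Hangle.
  pose proof (hnorm_pos_of_nonzero d Hd) as Hdpos.
  set (q := hinner d s / (hnorm d * hnorm d)) in *.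
  assert (Hq : -1 <= q <= 1).
  { pose proof (cauchy_le d s). pose proof (cauchy_ge d s). rewrite Hs in *.
    unfold q. split.
    - apply Rmult_le_reg_r with (hnorm d * hnorm d); [nra|]. field_simplify; lra.
    - apply Rmult_le_reg_r with (hnorm d * hnorm d); [nra|]. field_simplify; lra. }
  assert (Hcos : cos gamma <= q).
  { rewrite <- (cos_acos q Hq). pose proof (acos_bound q).
    apply cos_decr_1; lra. }
  unfold q in Hcos.
  apply Rmult_le_compat_r with (r := hnorm d * hnorm d) in Hcos; [|nra].
  field_simplify in Hcos; lra.
Qed.

End HilbertGeometry.

(** The descent step of length [s] against [g]: [u_s = u + descent_step (grad E u) s]. *)
Definition descent_step {H : Hilbert} (g : H) (s : R) : H :=
  hopp (hscal (s / hnorm g) g).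

Section DescentStep.
Context {H : Hilbert}.

Lemma hnorm_descent_step (g : H) s : g <> hzero -> 0 <= s -> hnorm (descent_step g s) = s.
Proof.
  intros Hg Hs. pose proof (hnorm_pos_of_nonzero g Hg).
  unfold descent_step. rewrite hnorm_opp, hnorm_scal.
  rewrite Rabs_pos_eq by (apply Rmult_le_pos; [lra | apply Rlt_le, Rinv_0_lt_compat; lra]).
  field. lra.
Qed.

Lemma descent_step_inner gamma (g s' : H) s :
  0 <= gamma <= PI -> g <> hzero -> 0 < s ->
  Agamma gamma (descent_step g s) s' ->
  hnorm s' = s /\ hinner g s' <= - (cos gamma * s * hnorm g).
Proof.
  intros Hgamma Hg Hs Hangle.
  pose proof (hnorm_pos_of_nonzero g Hg) as Hgpos.
  assert (Hstep : descent_step g s <> hzero).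
  { intro Hz. pose proof (hnorm_descent_step g s Hg ltac:(lra)) as Hn.
    rewrite Hz, hnorm_zero in Hn. lra. }
  destruct (Agamma_inner_lower gamma _ s' Hgamma Hstep Hangle) as [Hn Hinner].
  rewrite hnorm_descent_step in Hn, Hinner by (auto; lra).
  split; [exact Hn|].
  unfold descent_step in Hinner. rewrite hinner_opp_l, hinner_scal in Hinner.
  replace (hinner g s') with (hnorm g / s * (s / hnorm g * hinner g s'))
    by (field; lra).
  replace (- (cos gamma * s * hnorm g)) with (hnorm g / s * (- (cos gamma * (s * s))))
    by (field; lra).
  apply Rmult_le_compat_l; [apply Rlt_le, Rdiv_lt_0_compat|]; lra.
Qed.

End DescentStep.

Section Calculus.
Context {H : Hilbert}.
Variables (E : H -> R) (gradE : H -> H).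
Hypothesis HC1 : is_C1_gradient E gradE.

Lemma deriv_line (c h : H) (th : R) :
  derivable_pt_lim (fun tau => E (hadd c (hscal tau h))) th
    (hinner (gradE (hadd c (hscal th h))) h).
Proof.
  destruct HC1 as [Hdiff _]. intros eps Heps.
  set (p := hadd c (hscal th h)).
  pose proof (hnorm_pos h) as Hh.
  set (eps' := eps / (2 * (hnorm h + 1))).
  assert (Heps' : eps' > 0) by (unfold eps'; apply Rdiv_lt_0_compat; lra).
  destruct (Hdiff p eps' Heps') as [dl [Hdl Hd]].
  assert (Hrad : 0 < dl / (hnorm h + 1)) by (apply Rdiv_lt_0_compat; lra).
  exists (mkposreal _ Hrad). intros k Hk Hkabs. simpl in Hkabs.
  replace (hadd c (hscal (th + k) h)) with (hadd p (hscal k h))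
    by (unfold p; rewrite hscal_distr_s, hadd_assoc; reflexivity).
  assert (Hkpos : 0 < Rabs k) by (apply Rabs_pos_lt; auto).
  assert (Hkh : hnorm (hscal k h) < dl).
  { rewrite hnorm_scal.
    apply Rmult_lt_compat_r with (r := hnorm h + 1) in Hkabs; [|lra].
    field_simplify in Hkabs; [|lra]. nra. }
  specialize (Hd _ Hkh). rewrite hnorm_scal, hinner_scal_r in Hd.
  set (Y := E (hadd p (hscal k h)) - E p - k * hinner (gradE p) h) in Hd.
  replace ((E (hadd p (hscal k h)) - E p) / k - hinner (gradE p) h) with (Y / k)
    by (unfold Y; field; auto).
  unfold Rdiv. rewrite Rabs_mult, Rabs_inv.
  assert (Rabs Y * / Rabs k <= eps' * hnorm h).
  { apply Rmult_le_reg_r with (Rabs k); [lra|]. field_simplify; lra. }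
  assert (eps' * hnorm h < eps).
  { unfold eps'. apply Rmult_lt_reg_r with (2 * (hnorm h + 1)); [lra|].
    field_simplify; [|lra]. nra. }
  lra.
Qed.

Lemma mean_value_segment (c h : H) :
  exists th, 0 < th < 1 /\
    E (hadd c h) - E c = hinner (gradE (hadd c (hscal th h))) h.
Proof.
  destruct (MVT_cor2 (fun tau => E (hadd c (hscal tau h)))
    (fun tau => hinner (gradE (hadd c (hscal tau h))) h) 0 1 Rlt_0_1
    (fun th _ => deriv_line c h th)) as [th [Hmvt Hth]].
  exists th. split; [exact Hth|].
  rewrite hscal_one, hscal_zero, hadd_zero_r in Hmvt. lra.
Qed.

Lemma max_gradient_orth (C : H -> Prop) (u : H) :
  rel_int C u -> (forall w, C w -> E w <= E u) -> orth (gradE u) C.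
Proof.
  intros [Cu [r [Hr Hint]]] Hmax y Hy.
  set (f := fun tau => E (hadd u (hscal tau y))).
  pose proof (hnorm_pos y) as Hypos.
  set (b := r / (hnorm y + 1)).
  assert (Hb : 0 < b) by (unfold b; apply Rdiv_lt_0_compat; lra).
  assert (Hlocal : forall tau, -b < tau -> tau < b -> f tau <= f 0).
  { intros tau Htau1 Htau2. unfold f. rewrite hscal_zero, hadd_zero_r.
    apply Hmax, Hint.
    - apply span_add; [apply span_of; auto | apply span_scal; auto].
    - unfold ball. rewrite hsub_add_cancel, hnorm_scal.
      assert (Rabs tau < b) by (apply Rabs_def1; lra).
      assert (b * hnorm y < r).
      { unfold b. apply Rmult_lt_reg_r with (hnorm y + 1); [lra|].
        field_simplify; [|lra]. nra. }
      pose proof (Rabs_pos tau). nra. }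
  pose proof (deriv_line u y 0) as Hderiv.
  rewrite hscal_zero, hadd_zero_r in Hderiv.
  rewrite <- (derive_pt_eq_0 f 0 _ (exist _ _ Hderiv) Hderiv).
  apply deriv_maximum with (-b) b; lra || exact Hlocal.
Qed.

Lemma gradient_control (u0 : H) kappa :
  gradE u0 <> hzero -> 0 < kappa <= 1 ->
  exists r1, r1 > 0 /\ forall u v, hnorm (hsub u u0) < r1 -> hnorm (hsub v u0) < r1 ->
    gradE u <> hzero /\
    hnorm (hsub (gradE v) (gradE u)) <= kappa * hnorm (gradE u) / 4.
Proof.
  destruct HC1 as [_ Hcont]. intros Hg0 Hkappa.
  set (n0 := hnorm (gradE u0)).
  assert (Hn0 : 0 < n0) by (apply hnorm_pos_of_nonzero; exact Hg0).
  set (eps := kappa * n0 / 16).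
  assert (Heps : eps > 0) by (unfold eps; nra).
  destruct (Hcont u0 eps Heps) as [r1 [Hr1 Hnear]].
  exists r1. split; [exact Hr1|]. intros u v Hu Hv.
  pose proof (Hnear u Hu) as Hgu. pose proof (Hnear v Hv) as Hgv.
  pose proof (hnorm_lower (gradE u) (gradE u0)) as Hlow.
  assert (Hgu_large : n0 / 2 <= hnorm (gradE u))
    by (unfold eps in *; fold n0 in Hlow; nra).
  split.
  - intro Hz. rewrite Hz, hnorm_zero in Hgu_large. lra.
  - pose proof (hnorm_sub_via (gradE v) (gradE u) (gradE u0)). unfold eps in *. nra.
Qed.

End Calculus.

Section PeakSelection.
Context {H : Hilbert}.
Variables (E : H -> R) (gradE : H -> H) (A : H -> Prop) (C : H -> H -> Prop)
  (phi : H -> H).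
Hypothesis HC1 : is_C1_gradient E gradE.
Hypothesis Hps : peak_selection E A C phi.

Lemma peak_fixed u : Ran A phi u -> phi u = u /\ A u.
Proof.
  intros [w [Aw Hw]]. subst u. destruct Hps as [HA Hsel].
  destruct (Hsel w Aw) as (_ & Hint & Hconst & _).
  split; [apply Hconst; exact Hint | apply HA; exact Aw].
Qed.

Lemma peak_max u : Ran A phi u -> forall w, C u w -> E w <= E u.
Proof.
  intros Hu. destruct (peak_fixed u Hu) as [Hfix Au].
  destruct Hps as [_ Hsel]. destruct (Hsel u Au) as (_ & _ & _ & _ & Hmax).
  rewrite Hfix in Hmax. exact Hmax.
Qed.

(** The steepest-descent step from a point of [Ran phi] is orthogonal to its cone,
    so that (AC2) applies to it. *)
Lemma peak_descent_orth u s : Ran A phi u -> orth (descent_step (gradE u) s) (C u).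
Proof.
  intros Hu y Hy. destruct (peak_fixed u Hu) as [Hfix Au].
  destruct Hps as [_ Hsel]. destruct (Hsel u Au) as (_ & Hint & _ & _ & Hmax).
  rewrite Hfix in Hint, Hmax.
  unfold descent_step. rewrite hinner_opp_l, hinner_scal.
  rewrite (max_gradient_orth E gradE HC1 (C u) u Hint Hmax y Hy). ring.
Qed.

Lemma cone_descent_estimate u gamma delta s0 c t s' :
  Ran A phi u -> gradE u <> hzero -> 0 <= gamma <= PI -> 0 < cos gamma ->
  delta < 1 -> 0 < s0 -> C u c -> 1 - delta <= t ->
  Agamma gamma (descent_step (gradE u) s0) s' ->
  (forall v, hnorm (hsub v (hadd c (hscal t s'))) <= 2 * t * s0 ->
     hnorm (hsub (gradE v) (gradE u)) <= cos gamma * hnorm (gradE u) / 4) ->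
  E (hadd c (hscal t s')) - E u < - ((1 / 2) * (1 - delta) * cos gamma) * s0 * hnorm (gradE u).
Proof.
  intros Hu Hg Hgamma Hcos Hdelta Hs0 Hc Ht Hangle Hclose.
  set (g := gradE u) in *. set (h := hscal t s'). set (x := hadd c h).
  pose proof (hnorm_pos_of_nonzero g Hg) as Hgpos.
  destruct (descent_step_inner gamma g s' s0 Hgamma Hg Hs0 Hangle) as [Hs' Hgs'].
  pose proof (peak_max u Hu c Hc) as Hcu.
  destruct (mean_value_segment E gradE HC1 c h) as [th [Hth Hmvt]]. fold x in Hmvt.
  set (xi := hadd c (hscal th h)) in *.
  assert (Hh : hnorm h = t * s0) by (unfold h; rewrite hnorm_scal, Hs', Rabs_pos_eq; lra).
  assert (Hxi : hnorm (hsub xi x) <= 2 * t * s0).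
  { pose proof (hnorm_sub_via xi x c) as Htri.
    unfold xi, x in Htri. rewrite !hsub_add_cancel, hnorm_scal, Rabs_pos_eq in Htri by lra.
    fold x xi in Htri. pose proof (hnorm_pos h). nra. }
  assert (Hslope : hinner (gradE xi) s' <= - (3 / 4) * cos gamma * s0 * hnorm g).
  { replace (hinner (gradE xi) s') with (hinner g s' + hinner (hsub (gradE xi) g) s')
      by (rewrite hinner_sub_l; ring).
    pose proof (cauchy_le (hsub (gradE xi) g) s') as Hcs. rewrite Hs' in Hcs.
    pose proof (Hclose xi Hxi). nra. }
  unfold h in Hmvt. rewrite hinner_scal_r in Hmvt.
  assert (Hdrop : 0 < cos gamma * s0 * hnorm g) by (apply Rmult_lt_0_compat; nra).
  assert (0 <= (t - (1 - delta)) * (- hinner (gradE xi) s')) by (apply Rmult_le_pos; lra).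
  nra.
Qed.

Lemma step_in_Sstar u gamma delta s0 :
  Ran A phi u -> gradE u <> hzero -> 0 <= gamma <= PI -> 0 < cos gamma ->
  0 < delta < 1 -> 0 < s0 ->
  A (u_s gradE u s0) ->
  cone_plus (C u) gamma delta (descent_step (gradE u) s0) (phi (u_s gradE u s0)) ->
  (forall v, hnorm (hsub v (phi (u_s gradE u s0))) <= 4 * s0 ->
     hnorm (hsub (gradE v) (gradE u)) <= cos gamma * hnorm (gradE u) / 4) ->
  Sstar E gradE A phi ((1 / 2) * (1 - delta) * cos gamma) u s0.
Proof.
  intros Hu Hg Hgamma Hcos Hdelta Hs0 HAstep [c [t [s' [Hc [Ht [Hangle Hx]]]]]] Hclose.
  split; [lra|]. split; [exact HAstep|]. rewrite Hx.
  apply cone_descent_estimate; auto; try lra.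
  intros v Hv. apply Hclose. rewrite Hx. nra.
Qed.

Lemma uniform_stepsize_near_peak gamma delta u0 :
  is_open A -> AC2 A C phi gamma delta -> Ran A phi u0 -> gradE u0 <> hzero ->
  continuous_at_on A phi u0 ->
  exists R0 s0, R0 > 0 /\ s0 > 0 /\ forall u, ball u0 R0 u -> Ran A phi u ->
    gradE u <> hzero /\ Sstar E gradE A phi ((1 / 2) * (1 - delta) * cos gamma) u s0.
Proof.
  intros HAopen [Hgamma [Hdelta HAC]] Hu0 Hg0 Hcont.
  destruct (peak_fixed u0 Hu0) as [Hfix0 Au0].
  assert (Hcos : 0 < cos gamma) by (apply cos_gt_0; lra).
  assert (Hgamma' : 0 <= gamma <= PI) by (pose proof PI_RGT_0; lra).
  destruct (gradient_control E gradE HC1 u0 (cos gamma) Hg0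
    (conj Hcos (proj2 (COS_bound gamma)))) as [r1 [Hr1 Hgrad]].
  destruct (HAC u0 Hu0) as [r [Hr HACu0]].
  destruct (HAopen u0 Au0) as [rA [HrA HAball]].
  set (rho := Rmin r r1 / 2).
  assert (Hrho : rho > 0) by (unfold rho; apply Rdiv_lt_0_compat; [apply Rmin_glb_lt|]; lra).
  destruct (Hcont rho Hrho) as [rf [Hrf Hphi]]. rewrite Hfix0 in Hphi.
  set (R0 := Rmin (Rmin r1 r) (Rmin rA rf) / 2).
  assert (HR0 : 0 < R0) by (unfold R0; apply Rdiv_lt_0_compat; [repeat apply Rmin_glb_lt|]; lra).
  assert (HR0r : R0 <= r1 / 2 /\ R0 <= r / 2 /\ R0 <= rA / 2 /\ R0 <= rf / 2 /\
                 rho <= r / 2 /\ rho <= r1 / 2).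
  { unfold R0, rho.
    pose proof (Rmin_l (Rmin r1 r) (Rmin rA rf)). pose proof (Rmin_r (Rmin r1 r) (Rmin rA rf)).
    pose proof (Rmin_l r1 r). pose proof (Rmin_r r1 r).
    pose proof (Rmin_l rA rf). pose proof (Rmin_r rA rf).
    pose proof (Rmin_l r r1). pose proof (Rmin_r r r1). lra. }
  exists R0, (R0 / 4). split; [lra|]. split; [lra|].
  intros u Hu HRu. unfold ball in Hu.
  assert (Hur1 : hnorm (hsub u u0) < r1) by lra.
  destruct (Hgrad u u Hur1 Hur1) as [Hgu _].
  split; [exact Hgu|].
  set (s0 := R0 / 4). set (d := descent_step (gradE u) s0).
  assert (HR0s0 : R0 = 4 * s0) by (unfold s0; lra).
  assert (Hd : hnorm d = s0) by (apply hnorm_descent_step; auto; lra).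
  assert (Hstep : u_s gradE u s0 = hadd u d) by reflexivity.
  assert (Hud : hnorm (hsub (hadd u d) u0) < R0 + s0).
  { rewrite hsub_add_l. pose proof (hnorm_triangle (hsub u u0) d). lra. }
  assert (Aud : A (hadd u d)) by (apply HAball; unfold ball; lra).
  set (x := phi (hadd u d)).
  assert (Hx : hnorm (hsub x u0) < rho) by (apply Hphi; auto; lra).
  assert (Cx : C (hadd u d) x).
  { destruct Hps as [_ Hsel]. destruct (Hsel _ Aud) as (_ & _ & _ & Cx & _). exact Cx. }
  apply step_in_Sstar; try assumption; try lra; rewrite Hstep.
  - apply (HACu0 u d HRu); fold x; unfold ball; try rewrite hsub_zero; try lra.
    + apply peak_descent_orth. exact HRu.
    + exact Aud.
    + exact Cx.
  - intros v Hv. apply (Hgrad u v Hur1).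
    pose proof (hnorm_sub_tri v u0 x). fold x in Hv. lra.
Qed.

End PeakSelection.

Lemma Sset_lower_bound {H : Hilbert} (E : H -> R) gradE A phi alpha (u : H) s0 s :
  Sstar E gradE A phi alpha u s0 -> Sset E gradE A phi alpha u s -> s0 / 2 <= s.
Proof.
  intros Hs0 [_ [m [[Hub _] Hhalf]]].
  pose proof (Hub s0 Hs0). lra.
Qed.

Theorem mainTheorem2 (H : Hilbert) (E : H -> R) (gradE : H -> H)
  (A : H -> Prop) (C : H -> H -> Prop) (phi : H -> H) (gamma delta : R) (u0 : H) :
  is_C1_gradient E gradE ->
  is_open A ->
  peak_selection E A C phi ->
  AC1 A C ->
  AC2 A C phi gamma delta ->
  Ran A phi u0 ->
  gradE u0 <> hzero ->
  continuous_at_on A phi u0 ->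
  let alpha := (1 / 2) * (1 - delta) * cos gamma in
  exists (V : H -> Prop) (sstar : R),
    is_open V /\ V u0 /\ sstar > 0 /\
    forall u, V u -> Ran A phi u ->
      gradE u <> hzero /\
      forall s, Sset E gradE A phi alpha u s -> sstar <= s.
Proof.
  intros HC1 HA Hps _ HAC2 Hu0 Hg0 Hcont alpha.
  destruct (uniform_stepsize_near_peak E gradE A C phi HC1 Hps gamma delta u0
    HA HAC2 Hu0 Hg0 Hcont) as [R0 [s0 [HR0 [Hs0 Huniform]]]].
  exists (ball u0 R0), (s0 / 2).
  split; [apply ball_open|].
  split; [unfold ball; rewrite hsub_self, hnorm_zero; exact HR0|].
  split; [lra|].
  intros u Hu HRu. destruct (Huniform u Hu HRu) as [Hgu Hstar].
  split; [exact Hgu|].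
  intros s Hs. exact (Sset_lower_bound E gradE A phi alpha u s0 s Hstar Hs).
Qed.
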